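(* Let $f:\mathbb{R}^n\to\mathbb{R}\cup\{+\infty\}$ be closed and convex, let $X\in\mathbb{R}^{n\times m}$ have rank $r$ with compact SVD $X=U_r\Sigma_r V_r^\top$ ($U_r\in\mathbb{R}^{n\times r}$, $\Sigma_r\in\mathbb{R}^{r\times r}$, $V_r\in\mathbb{R}^{m\times r}$), let $\gamma>0$ and $k\ge 0$. For an integer $q\ge 0$ define $$p_{\rm con}(q)=\min_{w\in\mathbb{R}^m,\ \|w\|_0\le q}\ f(Xw)+\tfrac{\gamma}{2}\|w\|_2^2,$$ and define the relaxation $$p^{**}_{\rm con}(k)=\min_{v\in\mathbb{R}^m,\ u\in[0,1]^m,\ \mathbf 1^\top u\le k}\ f(XD(u)v)+\tfrac{\gamma}{2}v^\top D(u)v .$$ Let $(v^*,u^* )$ be an optimal solution of this relaxation with optimal value $t^*$, let $z^*=\Sigma_rV_r^\top D(u^* )v^*\in\mathbb{R}^r$, let $\ell_i$ denote the $i$-th column of $\Sigma_rV_r^\top$, and let $c\sim\mathcal N(0,I_m)$. Consider the linear program in $u\in\mathbb{R}^m$: $$\min\ c^\top u\quad\text{s.t.}\quad f(U_rz^* )+\sum_{i=1}^m u_i\tfrac{\gamma}{2}(v_i^* )^2=t^*,\quad \sum_{i=1}^m u_i\le k,\quad \sum_{i=1}^m u_i\ell_i v_i^*=z^*,\quad u\in[0,1]^m.$$ Then, with probability one (over $c$), from an optimal basic feasible solution $\bar u$ of this linear program one can construct the point $w=D(\bar u)v^*$ (equivalently, with $S=\{i:\bar u_i\notin\{0,1\}\}$,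 set $\tilde u_i=1,\tilde v_i=\bar u_iv_i^*$ for $i\in S$ and $\tilde u_i=\bar u_i,\tilde v_i=v_i^*$ for $i\notin S$, and $w=D(\tilde u)\tilde v$), which has at most $k+r+2$ nonzero coefficients, and whose objective value $\mathrm{OPT}=f(Xw)+\tfrac{\gamma}{2}\|w\|_2^2$ satisfies $$p_{\rm con}(k+r+2)\le \mathrm{OPT}\le p^{**}_{\rm con}(k)\le p_{\rm con}(k).$$
   Context: $\|w\|_0$ denotes the number of nonzero entries of $w$. For $u\in\mathbb{R}^m$, $D(u)=\mathrm{diag}(u_1,\dots,u_m)$. $\mathbf 1$ is the all-ones vector. A function is closed if it is lower semicontinuous (its epigraph is closed). *)

From HB Require Import structures.
From mathcomp Require Import all_boot all_order all_algebra.
From mathcomp Require Import all_classical all_reals all_analysis.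
Set Implicit Arguments. Unset Strict Implicit. Unset Printing Implicit Defensive.
Import Order.TTheory GRing.Theory Num.Theory numFieldNormedType.Exports.
Local Open Scope classical_set_scope.
Local Open Scope ring_scope.

Definition l0norm {R : realType} {m : nat} (w : 'cV[R]_m) : nat :=
  #|[set i : 'I_m | w i 0 != 0]|.

(* D(u) v as a vector: entrywise product *)
Definition Dmul {R : realType} {m : nat} (u v : 'cV[R]_m) : 'cV[R]_m :=
  \col_i (u i 0 * v i 0).

Definition sqnorm {R : realType} {m : nat} (w : 'cV[R]_m) : R :=
  \sum_i (w i 0) ^+ 2.

Definition convex_efun {R : realType} {n : nat} (f : 'cV[R]_n -> \bar R) : Prop :=
  forall (x y : 'cV[R]_n) (t : R), 0 <= t -> t <= 1 ->
    (f (t *: x + (1 - t) *: y)%R <= t%:E * f x + (1 - t)%:E * f y)%E.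

Definition epigraph {R : realType} {n : nat} (f : 'cV[R]_n -> \bar R)
  : set ('cV[R]_n * R) := [set p | (f p.1 <= p.2%:E)%E].

Definition closed_efun {R : realType} {n : nat} (f : 'cV[R]_n -> \bar R) : Prop :=
  closed (epigraph f).

Definition p_con {R : realType} {n m : nat} (f : 'cV[R]_n -> \bar R)
  (X : 'M[R]_(n, m)) (gamma : R) (q : nat) : \bar R :=
  ereal_inf [set (f (X *m w) + (gamma / 2 * sqnorm w)%:E)%E
            | w in [set w : 'cV[R]_m | (l0norm w <= q)%N]].

Definition relax_obj {R : realType} {n m : nat} (f : 'cV[R]_n -> \bar R)
  (X : 'M[R]_(n, m)) (gamma : R) (v u : 'cV[R]_m) : \bar R :=
  (f (X *m Dmul u v) + (gamma / 2 * \sum_i (u i 0 * (v i 0) ^+ 2))%:E)%E.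

Definition relax_feasible {R : realType} {m : nat} (k : nat) (u : 'cV[R]_m) : Prop :=
  (forall i, 0 <= u i 0 <= 1) /\ \sum_i u i 0 <= k%:R.

Definition p_relax {R : realType} {n m : nat} (f : 'cV[R]_n -> \bar R)
  (X : 'M[R]_(n, m)) (gamma : R) (k : nat) : \bar R :=
  ereal_inf [set relax_obj f X gamma vu.1 vu.2
            | vu in [set vu : 'cV[R]_m * 'cV[R]_m | relax_feasible k vu.2]].

Definition lp_feasible {R : realType} {n m r : nat} (f : 'cV[R]_n -> \bar R)
  (Ur : 'M[R]_(n, r)) (L : 'M[R]_(r, m)) (gamma : R) (k : nat)
  (vs : 'cV[R]_m) (zs : 'cV[R]_r) (ts : \bar R) (u : 'cV[R]_m) : Prop :=
  [/\ (f (Ur *m zs) + (\sum_i u i 0 * (gamma / 2 * (vs i 0) ^+ 2))%:E)%E = ts,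
      \sum_i u i 0 <= k%:R,
      \sum_i (u i 0 * vs i 0) *: col i L = zs
    & forall i, 0 <= u i 0 <= 1].

(* Basic feasible solution: u is feasible and among the constraint rows active
   at u (equality constraints are always active) there are m linearly
   independent ones, i.e. the matrix of active constraint rows (inactive rows
   replaced by 0) has rank m. *)
Definition lp_active_rows {R : realType} {m r : nat} (L : 'M[R]_(r, m))
  (gamma : R) (k : nat) (vs : 'cV[R]_m) (u : 'cV[R]_m) : 'M[R]_(1 + 1 + (r + m), m) :=
  col_mx (col_mx (\row_i (gamma / 2 * (vs i 0) ^+ 2))
                 (if \sum_i u i 0 == k%:R then const_mx 1 else 0))
         (col_mx (L *m diag_mx (vs^T))
                 (diag_mx (\row_i ((u i 0 == 0) || (u i 0 == 1))%:R))).

Definition lp_bfs {R : realType} {n m r : nat} (f : 'cV[R]_n -> \bar R)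
  (Ur : 'M[R]_(n, r)) (L : 'M[R]_(r, m)) (gamma : R) (k : nat)
  (vs : 'cV[R]_m) (zs : 'cV[R]_r) (ts : \bar R) (u : 'cV[R]_m) : Prop :=
  lp_feasible f Ur L gamma k vs zs ts u /\
  \rank (lp_active_rows L gamma k vs u) = m.

Definition lp_optimal {R : realType} {n m r : nat} (f : 'cV[R]_n -> \bar R)
  (Ur : 'M[R]_(n, r)) (L : 'M[R]_(r, m)) (gamma : R) (k : nat)
  (vs : 'cV[R]_m) (zs : 'cV[R]_r) (ts : \bar R) (c u : 'cV[R]_m) : Prop :=
  lp_feasible f Ur L gamma k vs zs ts u /\
  forall u', lp_feasible f Ur L gamma k vs zs ts u' ->
    \sum_i c i 0 * u i 0 <= \sum_i c i 0 * u' i 0.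

From HB Require Import structures.
From mathcomp Require Import all_boot all_order all_algebra.
From mathcomp Require Import all_classical all_reals all_analysis.
From mathcomp Require Import lra zify.
Import Order.TTheory GRing.Theory Num.Theory.
Local Open Scope classical_set_scope.
Local Open Scope ring_scope.

Set Implicit Arguments. Unset Strict Implicit. Unset Printing Implicit Defensive.

(* Every u feasible for the linear program gives w = D(u) vs with X w = Ur zs and
   objective f (X w) + gamma/2 sum_i u_i^2 vs_i^2 <= ts, since u_i^2 <= u_i; and
   ts <= p**_con(k) <= p_con(k) by optimality of (vs, us) and by taking for u the
   indicator of the support.  The feasible set lies in [0,1]^m, so moving along
   the kernel of the active constraint rows until a new constraint becomes active
   shows that a linear cost attains its minimum at a vertex.  At a vertex the
   active rows have rank m; besides the bounds u_i in {0,1} there are only r + 2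
   rows, so at most r + 2 coordinates are fractional, and at most k equal 1.
   This holds for every cost vector c, not only almost surely. *)

Section RankFacts.
Variable F : fieldType.

Lemma mxrank_ltnP p m (M : 'M[F]_(p, m)) :
  reflect (exists2 d : 'cV_m, d != 0 & M *m d = 0) (\rank M < m)%N.
Proof.
rewrite -subn_gt0 -mxrank_tr -mxrank_ker lt0n mxrank_eq0.
apply: (iffP rowV0Pn) => [[v /sub_kermxP vM v0] | [d d0 Md]].
  exists v^T; first by rewrite trmx_eq0.
  by rewrite -[M]trmxK -trmx_mul vM trmx0.
exists d^T; last by rewrite trmx_eq0.
by apply/sub_kermxP; rewrite -trmx_mul Md trmx0.
Qed.

Lemma mxrank_ltn_ker p1 p2 m (A : 'M[F]_(p1, m)) (B : 'M[F]_(p2, m)) (d : 'cV_m) :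
  (A <= B)%MS -> A *m d = 0 -> B *m d != 0 -> (\rank A < \rank B)%N.
Proof.
move=> sAB Ad Bd; apply: rank_ltmx; rewrite ltmxE sAB /=.
by apply: contra Bd => /submxP[D ->]; rewrite -mulmxA Ad mulmx0.
Qed.

Lemma mxrank_col_mx_le p1 p2 m (A : 'M[F]_(p1, m)) (B : 'M[F]_(p2, m)) :
  (\rank (col_mx A B) <= \rank A + \rank B)%N.
Proof. by rewrite -addsmxE; case: (mxrank_adds_leqif A B). Qed.

Lemma mxrank_diag_le m (d : 'rV[F]_m) :
  (\rank (diag_mx d) <= #|[pred i | (d 0 i != 0)%R]|)%N.
Proof.
rewrite diag_mx_sum_delta -sum1_card [X in (_ <= X)%N]big_mkcond /=.
apply: (big_ind2 (fun (M : 'M[F]_m) (x : nat) => \rank M <= x)%N).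
- by rewrite mxrank0.
- by move=> M1 x1 M2 x2 le1 le2; exact: leq_trans (mxrank_add _ _) (leq_add le1 le2).
move=> i _; rewrite inE; have [->|_] := eqVneq (d 0 i) 0; first by rewrite scale0r mxrank0.
by rewrite (leq_trans (mxrankS (scalemx_sub _ (submx_refl _)))) ?mxrank_delta.
Qed.

Lemma diag_indicator_mul_eq0 m (b : pred 'I_m) (v : 'cV[F]_m) :
  diag_mx (\row_i (b i)%:R) *m v = 0 <-> forall i, b i -> v i 0 = 0.
Proof.
rewrite mul_diag_mx; split => [/matrixP v0 i bi | v0].
  by have := v0 i 0; rewrite !mxE bi mul1r.
apply/matrixP => i j; rewrite !ord1 !mxE.
by case: (boolP (b i)) => [/v0->|_]; rewrite ?mulr0 ?mul0r.
Qed.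

Lemma diag_indicator_subS m n (b b' : pred 'I_m) (M : 'M[F]_(m, n)) :
  subpred b b' -> (diag_mx (\row_i (b i)%:R) *m M <= diag_mx (\row_i (b' i)%:R) *m M)%MS.
Proof.
move=> bb'; have -> : diag_mx (\row_i (b i)%:R) =
    diag_mx (\row_i (b i)%:R) *m diag_mx (\row_i (b' i)%:R) :> 'M[F]_m.
  rewrite mulmx_diag; congr diag_mx; apply/rowP => i; rewrite !mxE.
  by case: (boolP (b i)) => [/bb'->|_]; rewrite ?mulr1 ?mul0r.
by rewrite -mulmxA submxMl.
Qed.

End RankFacts.

Definition lin_cost (R : pzRingType) m (c u : 'cV[R]_m) : R := \sum_i c i 0 * u i 0.

Lemma lin_costD (R : comPzRingType) m (c u d : 'cV[R]_m) t :
  lin_cost c (u + t *: d) = lin_cost c u + t * lin_cost c d.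
Proof. by rewrite mulr_sumr -big_split; apply: eq_bigr => i _; rewrite !mxE mulrDr mulrCA. Qed.

Lemma lin_costN (R : pzRingType) m (c d : 'cV[R]_m) : lin_cost c (- d) = - lin_cost c d.
Proof. by rewrite -sumrN; apply: eq_bigr => i _; rewrite mxE mulrN. Qed.

Lemma mulmx_shift_entry (R : comPzRingType) p m (A : 'M[R]_(p, m)) (u d : 'cV[R]_m) t j :
  (A *m (u + t *: d)) j 0 = (A *m u) j 0 + t * (A *m d) j 0.
Proof. by rewrite mulmxDr -scalemxAr !mxE. Qed.

Section BoxExit.
Variable R : realFieldType.

Definition box_exit (x delta : R) : R :=
  if 0 < delta then (1 - x) / delta else x / - delta.

Lemma box_exit_ge0 x delta : 0 <= x <= 1 -> 0 <= box_exit x delta.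
Proof.
case/andP=> x0 x1; rewrite /box_exit; case: ifP => [delta_gt0 | /negbT].
  by rewrite divr_ge0 ?subr_ge0 // ltW.
by rewrite -leNgt => delta_le0; rewrite divr_ge0 ?oppr_ge0.
Qed.

Lemma box_exit_stays x delta t :
  0 <= x <= 1 -> 0 <= t <= box_exit x delta -> 0 <= x + t * delta <= 1.
Proof.
case/andP=> x0 x1 /andP[t0]; rewrite /box_exit.
case: (ltrgtP delta 0) => [delta_lt0 | delta_gt0 | ->]; last by rewrite mulr0 addr0 x0.
  rewrite ler_pdivlMr ?oppr_gt0 // mulrN => tdelta.
  have := mulr_ge0_le0 t0 (ltW delta_lt0).
  by move=> ?; apply/andP; split; lra.
rewrite ler_pdivlMr // => tdelta.
have := mulr_ge0 t0 (ltW delta_gt0).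
by move=> ?; apply/andP; split; lra.
Qed.

Lemma box_exit_at_bound x delta : delta != 0 ->
  (x + box_exit x delta * delta == 0) || (x + box_exit x delta * delta == 1).
Proof.
move=> delta0; rewrite /box_exit; case: ifP => _; first by rewrite divfK // subrKC eqxx orbT.
by rewrite invrN mulrN mulNr divfK // subrr eqxx.
Qed.

End BoxExit.

Section BoxPolytope.
Variables (R : realFieldType) (m p q : nat).
Variables (E : 'M[R]_(p, m)) (e : 'cV[R]_p) (G : 'M[R]_(q, m)) (g : 'cV[R]_q).

Definition in_polytope (u : 'cV[R]_m) : Prop :=
  [/\ E *m u = e, forall j, (G *m u) j 0 <= g j 0 & forall i, 0 <= u i 0 <= 1].

Definition tight (u : 'cV[R]_m) : pred 'I_q := fun j => (G *m u) j 0 == g j 0.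

Definition at_bound (u : 'cV[R]_m) : pred 'I_m := fun i => (u i 0 == 0) || (u i 0 == 1).

Definition active_rows (u : 'cV[R]_m) : 'M[R]_(p + (q + m), m) :=
  col_mx E (col_mx (diag_mx (\row_j (tight u j)%:R) *m G)
                   (diag_mx (\row_i (at_bound u i)%:R))).

Definition is_vertex (u : 'cV[R]_m) : Prop :=
  in_polytope u /\ \rank (active_rows u) = m.

Lemma active_rows_mul_eq0 u (d : 'cV[R]_m) :
  active_rows u *m d = 0 <->
  [/\ E *m d = 0, forall j, tight u j -> (G *m d) j 0 = 0
    & forall i, at_bound u i -> d i 0 = 0].
Proof.
rewrite /active_rows !mul_col_mx -mulmxA.
split => [/eqP | [-> /diag_indicator_mul_eq0-> /diag_indicator_mul_eq0->]].
  rewrite !col_mx_eq0 => /and3P[/eqP Ed /eqP/diag_indicator_mul_eq0 Gd].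
  by move=> /eqP/diag_indicator_mul_eq0 bd.
by rewrite !col_mx0.
Qed.

Lemma active_rowsS u u' :
  subpred (tight u) (tight u') -> subpred (at_bound u) (at_bound u') ->
  (active_rows u <= active_rows u')%MS.
Proof.
move=> tt' bb'; rewrite /active_rows -!addsmxE.
apply: addsmxS => //; rewrite -!addsmxE; apply: addsmxS; first exact: diag_indicator_subS.
by rewrite -[diag_mx _]mulmx1 -[X in (_ <= X)%MS]mulmx1 diag_indicator_subS.
Qed.

Definition active_pattern (u : 'cV[R]_m) :=
  ([set i | u i 0 == 0], [set i | u i 0 == 1], [set j | tight u j])%SET.

Lemma vertex_eq_pattern u u' :
  is_vertex u -> in_polytope u' -> active_pattern u = active_pattern u' -> u = u'.
Proof.
move=> [[Eu _ _] rank_u] [Eu' _ _] [/setP zero01 /setP one01 /setP tight01].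
have same_bound i : at_bound u i -> u i 0 = u' i 0.
  move=> /orP[] /eqP ui.
    by have := zero01 i; rewrite !inE ui eqxx => /esym/eqP.
  by have := one01 i; rewrite !inE ui eqxx => /esym/eqP.
apply/eqP; rewrite -subr_eq0; apply/eqP.
have /mxrank_ltnP : ~~ (\rank (active_rows u) < m)%N by rewrite rank_u ltnn.
apply: contra_notP => uu'; exists (u - u'); first exact/eqP.
apply/active_rows_mul_eq0; split.
- by rewrite mulmxBr Eu Eu' subrr.
- move=> j tj; have := tight01 j; rewrite !inE tj => /esym/eqP tj'.
  have -> : (G *m (u - u')) j 0 = (G *m u) j 0 - (G *m u') j 0.
    by rewrite mulmxBr !mxE.
  by rewrite (eqP tj) tj' subrr.
- by move=> i /same_bound; rewrite !mxE => ->; rewrite subrr.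
Qed.

Lemma ratio_test u d : in_polytope u -> d != 0 -> active_rows u *m d = 0 ->
  exists2 t, 0 <= t & in_polytope (u + t *: d) /\ active_rows (u + t *: d) *m d != 0.
Proof.
move=> [Eu Gu u01] d0 /active_rows_mul_eq0[Ed _ _].
have [i0 di0] : exists i0, d i0 0 != 0.
  apply/existsP; apply: contraR d0 => /existsPn d0.
  by apply/eqP/matrixP => i j; rewrite ord1 mxE; apply/eqP/negPn/d0.
pose blocking (x : 'I_m + 'I_q) :=
  match x with inl i => d i 0 != 0 | inr j => 0 < (G *m d) j 0 end.
pose exit (x : 'I_m + 'I_q) :=
  match x with
  | inl i => box_exit (u i 0) (d i 0)
  | inr j => (g j 0 - (G *m u) j 0) / (G *m d) j 0
  end.
have [x block_x exit_min] := arg_minP exit (di0 : blocking (inl i0)).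
have [t t_def] : {t | t = exit x} by exists (exit x).
have t_ge0 : 0 <= t.
  rewrite t_def; case: x block_x {exit_min t_def} => [i|j] /= bx.
    exact: box_exit_ge0 (u01 i).
  by rewrite divr_ge0 ?subr_ge0 ?Gu ?ltW.
exists t => //; split.
  split.
  - by rewrite mulmxDr -scalemxAr Ed scaler0 addr0 Eu.
  - move=> j; rewrite mulmx_shift_entry; have := Gu j.
    case: (ltrP 0 ((G *m d) j 0)) => Gdj.
      by have := exit_min (inr j) Gdj; rewrite /= -t_def ler_pdivlMr // => ? ?; lra.
    by have := mulr_ge0_le0 t_ge0 Gdj => ? ?; lra.
  - move=> i; rewrite !mxE; have [->|di] := eqVneq (d i 0) 0; first by rewrite mulr0 addr0.
    by apply: box_exit_stays (u01 i) _; rewrite t_ge0 t_def; exact: exit_min (inl i) di.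
apply/eqP => /active_rows_mul_eq0[_ tight_d bound_d].
case: x block_x t_def {exit_min} => [i|j] /= bx t_def.
  have /bound_d : at_bound (u + t *: d) i.
    by rewrite /at_bound !mxE t_def box_exit_at_bound.
  by move/eqP; rewrite (negbTE bx).
have /tight_d : tight (u + t *: d) j.
  by rewrite /tight mulmx_shift_entry t_def (divfK (lt0r_neq0 bx)) subrKC.
by move=> Gdj; rewrite Gdj ltxx in bx.
Qed.

Lemma improve_nonvertex c u : in_polytope u -> (\rank (active_rows u) < m)%N ->
  exists u', [/\ in_polytope u', lin_cost c u' <= lin_cost c u
                & (\rank (active_rows u) < \rank (active_rows u'))%N].
Proof.
move=> u_in /mxrank_ltnP[d0 d0_neq0 Ad0].
have [d [d_neq0 Ad cd]] : exists d, [/\ d != 0, active_rows u *m d = 0 & lin_cost c d <= 0].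
  have [cd0|cd0] := lerP (lin_cost c d0) 0; first by exists d0.
  exists (- d0); split; first by rewrite oppr_eq0.
    by rewrite mulmxN Ad0 oppr0.
  by rewrite lin_costN oppr_le0 ltW.
have [t t_ge0 [u'_in A'd]] := ratio_test u_in d_neq0 Ad.
exists (u + t *: d); split => //; first by rewrite lin_costD gerDl mulr_ge0_le0.
have [_ tight_d bound_d] := (active_rows_mul_eq0 u d).1 Ad.
apply: mxrank_ltn_ker Ad A'd; apply: active_rowsS => [j tj | i bi].
  by rewrite /tight mulmx_shift_entry tight_d // mulr0 addr0.
by rewrite /at_bound !mxE bound_d // mulr0 addr0.
Qed.

Lemma exists_vertex_le c u :
  in_polytope u -> exists2 v, is_vertex v & lin_cost c v <= lin_cost c u.
Proof.
move=> u_in; have [n] := ubnP (m - \rank (active_rows u))%N.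
elim: n u u_in => // n IH u u_in lt_n.
have [lt_rank|ge_rank] := ltnP (\rank (active_rows u)) m; last first.
  by exists u => //; split => //; apply/eqP; rewrite eqn_leq rank_leq_col.
have [u' [u'_in cu' lt_rank']] := improve_nonvertex c u_in lt_rank.
have [|v v_vert cv] := IH u' u'_in; last by exists v => //; exact: le_trans cu'.
by have := rank_leq_col (active_rows u'); lia.
Qed.

Lemma exists_optimal_vertex c u0 : in_polytope u0 ->
  exists2 v, is_vertex v & forall u, in_polytope u -> lin_cost c v <= lin_cost c u.
Proof.
move=> u0_in.
(* A vertex is determined by its active pattern, and there are finitely many
   patterns: minimise the cost over those realised by a vertex. *)
pose with_pattern P := [set v | is_vertex v /\ active_pattern v = P].
pose has_vertex P := `[< exists v, with_pattern P v >].
pose vertex_of P := xget 0 (with_pattern P).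
have vertex_ofP P : has_vertex P -> with_pattern P (vertex_of P).
  by move=> /asboolP; exact: xgetPex.
have pattern_of v : is_vertex v -> has_vertex (active_pattern v).
  by move=> v_vert; apply/asboolP; exists v.
have [v0 v0_vert _] := exists_vertex_le c u0_in.
have [P hasP minP] := arg_minP (fun P => lin_cost c (vertex_of P)) (pattern_of _ v0_vert).
have [vP_vert _] := vertex_ofP P hasP.
exists (vertex_of P) => // u u_in.
have [v v_vert cv] := exists_vertex_le c u_in.
have [w_vert w_pat] := vertex_ofP _ (pattern_of _ v_vert).
rewrite -(vertex_eq_pattern w_vert v_vert.1 w_pat) in cv.
exact: le_trans (minP _ (pattern_of _ v_vert)) cv.
Qed.

End BoxPolytope.

Lemma Dmul_diag (R : realType) m (u v : 'cV[R]_m) : Dmul u v = diag_mx v^T *m u.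
Proof. by apply/matrixP => i j; rewrite ord1 mul_diag_mx !mxE; exact: mulrC. Qed.

Lemma sum_scale_col (R : comPzRingType) p m (A : 'M[R]_(p, m)) (w : 'cV[R]_m) :
  \sum_i w i 0 *: col i A = A *m w.
Proof.
apply/matrixP => j j'; rewrite ord1 summxE !mxE; apply: eq_bigr => i _.
by rewrite !mxE mulrC.
Qed.

Lemma l0normE (R : realType) m (w : 'cV[R]_m) : l0norm w = #|[pred i | w i 0 != 0]|.
Proof. by apply: eq_card => i; rewrite unfold_in /= asboolb. Qed.

Lemma p_relax_le_p_con (R : realType) n m (f : 'cV[R]_n -> \bar R) (X : 'M[R]_(n, m))
  gamma k : (p_relax f X gamma k <= p_con f X gamma k)%E.
Proof.
apply/ereal_infP => _ [w /= w_sparse <-].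
pose u := \col_i ((w i 0 != 0)%:R : R).
have uw_eq_w : Dmul u w = w.
  by apply/matrixP => i j; rewrite ord1 !mxE; case: eqVneq => [->|]; rewrite ?mulr0 ?mul1r.
apply: ereal_inf_lbound; exists (w, u); last first.
  rewrite /= /relax_obj uw_eq_w /sqnorm; congr (_ + (_ * _)%:E)%E.
  by apply: eq_bigr => i _; rewrite mxE; case: eqVneq => [->|]; rewrite ?expr0n ?mulr0 ?mul1r.
split => [i|]; first by rewrite mxE; case: (_ != 0); rewrite ?lexx ?ler01.
rewrite (_ : \sum_i u i 0 = (l0norm w)%:R) ?ler_nat // l0normE -sum1_card natr_sum [RHS]big_mkcond.
by apply: eq_bigr => i _; rewrite mxE inE; case: (_ != 0).
Qed.

Section SparseLP.
Variables (R : realType) (n m r : nat) (f : 'cV[R]_n -> \bar R).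
Variables (Ur : 'M[R]_(n, r)) (L : 'M[R]_(r, m)) (gamma : R) (k : nat) (vs : 'cV[R]_m).

Local Notation ones_row := (const_mx 1 : 'M[R]_(1, m)).
Local Notation k_col := (const_mx k%:R : 'cV[R]_1).
Local Notation penalty_row := (\row_i (gamma / 2 * vs i 0 ^+ 2) : 'rV[R]_m).
Local Notation LD := (L *m diag_mx vs^T).

Lemma ones_row_mul (u : 'cV[R]_m) j : (ones_row *m u) j 0 = \sum_i u i 0.
Proof. by rewrite !mxE; apply: eq_bigr => i _; rewrite mxE mul1r. Qed.

Lemma penalty_sumE (u : 'cV[R]_m) :
  \sum_i u i 0 * (gamma / 2 * vs i 0 ^+ 2) = (penalty_row *m u) 0 0.
Proof. by rewrite !mxE; apply: eq_bigr => i _; rewrite mxE mulrC. Qed.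

Lemma lp_columns_sumE (u : 'cV[R]_m) :
  \sum_i (u i 0 * vs i 0) *: col i L = LD *m u.
Proof.
by rewrite -mulmxA -Dmul_diag -sum_scale_col; apply: eq_bigr => i _; rewrite mxE.
Qed.

Lemma tight_ones_rows u :
  diag_mx (\row_j (tight ones_row k_col u j)%:R) *m ones_row =
  if \sum_i u i 0 == k%:R then const_mx 1 else 0.
Proof.
apply/matrixP => i j; rewrite mul_diag_mx !ord1 !mxE /tight ones_row_mul mxE.
by case: eqP => _; rewrite ?mxE ?mul1r ?mul0r.
Qed.

Lemma active_rows_sub_lp (p : nat) (E : 'M[R]_(p, m)) u :
  (E <= col_mx penalty_row LD)%MS ->
  (active_rows E ones_row k_col u <= lp_active_rows L gamma k vs u)%MS.
Proof.
move=> sE; rewrite /active_rows tight_ones_rows.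
set T := (if _ then _ else _); set D := diag_mx _; set lp := lp_active_rows _ _ _ _ _.
have : (col_mx (col_mx penalty_row T) (col_mx LD D) <= lp)%MS by exact: submx_refl.
rewrite !col_mx_sub => /andP[/andP[a_sub T_sub] /andP[LD_sub D_sub]].
by rewrite T_sub D_sub (submx_trans sE) // col_mx_sub a_sub LD_sub.
Qed.

Lemma lp_feasibleE zs ts u :
  lp_feasible f Ur L gamma k vs zs ts u <->
  [/\ (f (Ur *m zs) + ((penalty_row *m u) 0 0)%:E = ts)%E,
      forall j, (ones_row *m u) j 0 <= k_col j 0,
      LD *m u = zs & forall i, 0 <= u i 0 <= 1].
Proof.
rewrite /lp_feasible penalty_sumE lp_columns_sumE.
have knapsackE : (\sum_i u i 0 <= k%:R) <-> forall j, (ones_row *m u) j 0 <= k_col j 0.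
  by split => [le_k j | /(_ 0)]; rewrite ones_row_mul mxE.
by split=> -[? /knapsackE ? ? ?].
Qed.

Lemma lp_polytope us ts : let zs := L *m Dmul us vs in
  f (Ur *m zs) != -oo%E ->
  ts = (f (Ur *m zs) + ((penalty_row *m us) 0 0)%:E)%E ->
  exists p (E : 'M[R]_(p, m)),
    (forall u, lp_feasible f Ur L gamma k vs zs ts u <->
               in_polytope E (E *m us) ones_row k_col u)
    /\ (E <= col_mx penalty_row LD)%MS.
Proof.
move=> zs f_nNy ts_def; have zsE : zs = LD *m us by rewrite /zs Dmul_diag mulmxA.
(* When f (Ur *m zs) = +oo the objective constraint holds for every u. *)
case f_zs: (f (Ur *m zs)) => [x| |] in f_nNy ts_def *; last by [].
  exists (1 + r)%N, (col_mx penalty_row LD); split=> [u|]; last exact: submx_refl.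
  rewrite lp_feasibleE f_zs ts_def /in_polytope zsE !mul_col_mx.
  have penaltyE : (x%:E + ((penalty_row *m u) 0 0)%:E = x%:E + ((penalty_row *m us) 0 0)%:E)%E
                  <-> penalty_row *m u = penalty_row *m us.
    split=> [|->] //; rewrite -!EFinD => -[] /addrI eq_pen.
    by apply/matrixP => i j; rewrite !ord1.
  split=> [[/penaltyE-> ? -> ?] | [/eq_col_mx[/penaltyE ? ?] ? ?]] //.
exists r, LD; split=> [u|]; last by rewrite -addsmxE addsmxSr.
by rewrite lp_feasibleE f_zs ts_def /in_polytope zsE; split=> -[].
Qed.

Lemma lp_objective_le zs ts u : 0 <= gamma ->
  lp_feasible f Ur L gamma k vs zs ts u ->
  (f (Ur *m (L *m Dmul u vs)) + (gamma / 2 * sqnorm (Dmul u vs))%:E <= ts)%E.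
Proof.
move=> gamma_ge0 /lp_feasibleE[<- _ LDu u01].
rewrite [in L *m _]Dmul_diag (mulmxA L) LDu; apply: leeD2l.
rewrite lee_fin -penalty_sumE /sqnorm mulr_sumr; apply: ler_sum => i _.
have /andP[u_ge0 u_le1] := u01 i.
have pen_ge0 : 0 <= gamma / 2 * vs i 0 ^+ 2 by rewrite mulr_ge0 ?sqr_ge0 ?divr_ge0.
by rewrite mxE exprMn mulrCA ler_wpM2r // expr2 ler_piMr.
Qed.

Lemma mxrank_lp_active_rows_le (u : 'cV[R]_m) :
  (\rank (lp_active_rows L gamma k vs u) <= 2 + r + #|[pred i | at_bound u i]|)%N.
Proof.
rewrite /lp_active_rows; set T := (if _ then _ else _).
set D := diag_mx (\row_i (at_bound u i)%:R).
have D_le : (\rank D <= #|[pred i | at_bound u i]|)%N.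
  apply: leq_trans (mxrank_diag_le _) _; apply: subset_leq_card; apply/fintype.subsetP => i.
  by rewrite !inE mxE; case: (at_bound u i); rewrite ?eqxx.
apply: leq_trans (mxrank_col_mx_le _ _) _; rewrite -addnA.
apply: leq_add.
  exact: leq_trans (mxrank_col_mx_le _ _) (leq_add (rank_leq_row _) (rank_leq_row _)).
exact: leq_trans (mxrank_col_mx_le _ _) (leq_add (rank_leq_row _) D_le).
Qed.

Lemma l0norm_lp_bfs (u : 'cV[R]_m) : (forall i, 0 <= u i 0 <= 1) -> \sum_i u i 0 <= k%:R ->
  \rank (lp_active_rows L gamma k vs u) = m -> (l0norm (Dmul u vs) <= k + r + 2)%N.
Proof.
move=> u01 sum_le rank_m.
have ones_le : (#|[pred i | (u i 0 == 1)%R]| <= k)%N.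
  rewrite -(ler_nat R); apply: le_trans sum_le.
  rewrite -sum1_card natr_sum [X in X <= _]big_mkcond; apply: ler_sum => i _.
  by rewrite inE; case: eqP => [->|_] //; case/andP: (u01 i).
have supp : (l0norm (Dmul u vs) <=
             (m - #|[pred i | at_bound u i]|) + #|[pred i | (u i 0 == 1)%R]|)%N.
  rewrite -[X in (X - _)%N](card_ord m) -(cardC [pred i | at_bound u i]) addKn.
  rewrite l0normE -cardUI (leq_trans _ (leq_addr _ _)) //.
  apply: subset_leq_card; apply/fintype.subsetP => i; rewrite !inE mxE /at_bound.
  by have [->|_] := eqVneq (u i 0) 0; [rewrite mul0r eqxx | case: (u i 0 == 1)].
have := mxrank_lp_active_rows_le u; rewrite rank_m; lia.
Qed.

End SparseLP.

Theorem theorem2p1 (R : realType) (n m r : nat)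
  (f : 'cV[R]_n -> \bar R)
  (Hf_nonninfty : forall x, f x != -oo%E)
  (Hf_convex : convex_efun f) (Hf_closed : closed_efun f)
  (X : 'M[R]_(n, m)) (Hrank : \rank X = r)
  (Ur : 'M[R]_(n, r)) (s : 'rV[R]_r) (Vr : 'M[R]_(m, r))
  (Hs_pos : forall j, 0 < s 0 j)
  (HU : Ur^T *m Ur = 1%:M) (HV : Vr^T *m Vr = 1%:M)
  (HX : X = Ur *m diag_mx s *m Vr^T)
  (gamma : R) (Hgamma : 0 < gamma) (k : nat)
  (vs us : 'cV[R]_m) (ts : \bar R)
  (Hus : relax_feasible k us)
  (Hts : ts = relax_obj f X gamma vs us)
  (Hopt : forall v u, relax_feasible k u -> (ts <= relax_obj f X gamma v u)%E) :
  let L := diag_mx s *m Vr^T in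
  let zs := L *m Dmul us vs in
  forall c : 'cV[R]_m,
    (exists ub, lp_optimal f Ur L gamma k vs zs ts c ub /\
                lp_bfs f Ur L gamma k vs zs ts ub) /\
    (forall ub, lp_optimal f Ur L gamma k vs zs ts c ub ->
                lp_bfs f Ur L gamma k vs zs ts ub ->
      let w := Dmul ub vs in
      let OPT := (f (X *m w) + (gamma / 2 * sqnorm w)%:E)%E in
      [/\ (l0norm w <= k + r + 2)%N,
          (p_con f X gamma (k + r + 2) <= OPT)%E,
          (OPT <= p_relax f X gamma k)%E
        & (p_relax f X gamma k <= p_con f X gamma k)%E]).
Proof.
move=> L zs c.
have XE : X = Ur *m L by rewrite HX mulmxA.
have ts_zs : ts = (f (Ur *m zs) + ((\row_i (gamma / 2 * vs i 0 ^+ 2) *m us) 0 0)%:E)%E.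
  by rewrite Hts /relax_obj XE -mulmxA -penalty_sumE mulr_sumr; under eq_bigr do rewrite mulrCA.
have [p [E [lpE sE]]] := lp_polytope k (Hf_nonninfty _) ts_zs.
have [us01 us_sum] := Hus.
have us_in : in_polytope E (E *m us) (const_mx 1 : 'M[R]_(1, m)) (const_mx k%:R) us.
  apply/lpE; apply/lp_feasibleE; split=> //.
    by move=> j; rewrite ones_row_mul mxE.
  by rewrite /zs Dmul_diag mulmxA.
split.
  have [ub [ub_in ub_rank] ub_opt] := exists_optimal_vertex c us_in.
  exists ub; split.
    by split=> [|u /lpE]; [apply/lpE | exact: ub_opt].
  split; first exact/lpE.
  apply/eqP; rewrite eqn_leq rank_leq_col -{1}ub_rank mxrankS //.
  exact: active_rows_sub_lp.
move=> ub _ [ub_feas ub_rank] w OPT.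
have [_ ub_sum _ ub01] := ub_feas.
have OPT_le_ts : (OPT <= ts)%E.
  by rewrite /OPT XE -mulmxA; exact: lp_objective_le (ltW Hgamma) ub_feas.
have ts_le_relax : (ts <= p_relax f X gamma k)%E.
  by apply/ereal_infP => _ [[v u] /= u_feas <-]; exact: Hopt.
have w_sparse := l0norm_lp_bfs ub01 ub_sum ub_rank.
split => //; last exact: p_relax_le_p_con.
  by apply: ereal_inf_lbound; exists w.
exact: le_trans OPT_le_ts ts_le_relax.
Qed.
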